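(* Let $X\in\mathbb{R}^{N\times d}$, $W\in\mathbb{R}^{d\times m}$, $\Phi=\sigma(XW)$, and let $A\in\mathbb{R}^{m\times m}$ have all entries $A_{ij}\ge0$. Let $\gamma>0$ satisfy $\|A\|<\gamma^{-1}$. Then the unique solution $Z$ of $Z=\sigma(\gamma ZA+\Phi)$ is $Z=\Phi(I_m-\gamma A)^{-1}$.
   Context: $\sigma(u)=\max\{0,u\}$ applied entrywise; $\|\cdot\|$ is the spectral norm. *)

From HB Require Import structures.
From mathcomp Require Import all_boot all_order all_algebra.
From mathcomp Require Import classical_sets reals.
Set Implicit Arguments. Unset Strict Implicit. Unset Printing Implicit Defensive.
Import Order.TTheory GRing.Theory Num.Theory.
Local Open Scope ring_scope.
Local Open Scope classical_set_scope.

Definition relu (R : realType) (p q : nat) (M : 'M[R]_(p, q)) : 'M[R]_(p, q) :=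
  map_mx (fun u => Num.max 0 u) M.

Definition vnorm2 (R : realType) (n : nat) (v : 'cV[R]_n) : R :=
  Num.sqrt (\sum_(i < n) (v i 0) ^+ 2).

Definition spec_norm (R : realType) (p q : nat) (A : 'M[R]_(p, q)) : R :=
  sup [set vnorm2 (A *m v) | v in [set v : 'cV[R]_q | vnorm2 v <= 1]].

(* Put B := gamma A.  B is entrywise nonnegative and a strict contraction,
   |B v| <= c |v| with c := gamma ||A|| < 1, so 1 - B is invertible and
   Z0 := Phi (1 - B)^-1 satisfies Z0 = Z0 B + Phi.  Both the positivity of Z0
   (hence relu (Z0 B + Phi) = Z0) and the uniqueness of the fixed point reduce
   to one fact: a nonnegative matrix E with E <= E B entrywise vanishes.  For a
   row e of E this gives |e|^2 <= <e, B e^T> <= (|e|^2 + c^2 |e|^2) / 2, which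
   forces e = 0 since c < 1. *)
From mathcomp Require Import all_boot all_order all_algebra.
From mathcomp Require Import classical_sets reals.
From mathcomp Require Import lra.
Import Order.TTheory GRing.Theory Num.Theory.
Set Implicit Arguments. Unset Strict Implicit. Unset Printing Implicit Defensive.
Local Open Scope ring_scope.

Section EuclideanNorm.
Variables (R : realType) (n : nat).
Implicit Types (u v : 'cV[R]_n).

Lemma vnorm2_ge0 v : 0 <= vnorm2 v.
Proof. exact: sqrtr_ge0. Qed.

Lemma vnorm2_sqr v : vnorm2 v ^+ 2 = \sum_i v i 0 ^+ 2.
Proof. by rewrite sqr_sqrtr // sumr_ge0 // => i _; apply: sqr_ge0. Qed.

Lemma vnorm2Z (a : R) v : vnorm2 (a *: v) = `|a| * vnorm2 v.
Proof.
rewrite /vnorm2 -sqrtr_sqr -sqrtrM ?sqr_ge0 // mulr_sumr.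
by congr Num.sqrt; apply: eq_bigr => i _; rewrite mxE exprMn.
Qed.

Lemma vnorm2_0 : vnorm2 (0 : 'cV[R]_n) = 0.
Proof. by rewrite -(scale0r 0) vnorm2Z normr0 mul0r. Qed.

Lemma normr_entry_le_vnorm2 v i : `|v i 0| <= vnorm2 v.
Proof.
rewrite /vnorm2 -sqrtr_sqr; apply: ler_wsqrtr.
by rewrite (bigD1 i) //= lerDl sumr_ge0 // => j _; apply: sqr_ge0.
Qed.

Lemma vnorm2_eq0 v : vnorm2 v = 0 -> v = 0.
Proof.
move=> v0; apply/matrixP => i j; rewrite (ord1 j) mxE.
by apply/eqP; rewrite -normr_le0 -v0 normr_entry_le_vnorm2.
Qed.

Lemma dot_le_vnorm2 u v :
  2 * \sum_i u i 0 * v i 0 <= vnorm2 u ^+ 2 + vnorm2 v ^+ 2.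
Proof.
rewrite !vnorm2_sqr mulr_sumr -big_split /=; apply: ler_sum => i _.
by have := sqr_ge0 (u i 0 - v i 0); rewrite sqrrB; lra.
Qed.

End EuclideanNorm.

Section SpectralNorm.
Variables (R : realType) (p q : nat) (A : 'M[R]_(p, q)).

Lemma spec_norm_ubound :
  has_ubound [set vnorm2 (A *m v) | v in [set v : 'cV[R]_q | vnorm2 v <= 1]].
Proof.
exists (Num.sqrt (\sum_i (\sum_j `|A i j|) ^+ 2)) => _ [v v_le1 <-].
rewrite /vnorm2 ler_sqrt; last by rewrite sumr_ge0 // => i _; apply: sqr_ge0.
apply: ler_sum => i _; rewrite -real_normK ?num_real //.
rewrite lerXn2r ?nnegrE ?sumr_ge0 //.
rewrite mxE; apply: le_trans (ler_norm_sum _ _ _) _; apply: ler_sum => j _.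
rewrite normrM ler_piMr //.
exact: le_trans (normr_entry_le_vnorm2 v j) v_le1.
Qed.

Lemma spec_norm_ge0 : 0 <= spec_norm A.
Proof.
apply: (ub_le_sup spec_norm_ubound); exists 0; first by rewrite /= vnorm2_0.
by rewrite mulmx0 vnorm2_0.
Qed.

Lemma vnorm2_mulmx_le v : vnorm2 (A *m v) <= spec_norm A * vnorm2 v.
Proof.
have [v0|v_neq0] := eqVneq (vnorm2 v) 0.
  by rewrite v0 mulr0 (vnorm2_eq0 v0) mulmx0 vnorm2_0.
have v_gt0 : 0 < vnorm2 v by rewrite lt_def v_neq0 vnorm2_ge0.
have : vnorm2 (A *m ((vnorm2 v)^-1 *: v)) <= spec_norm A.
  apply: (ub_le_sup spec_norm_ubound); exists ((vnorm2 v)^-1 *: v) => //=.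
  by rewrite vnorm2Z ger0_norm ?invr_ge0 ?vnorm2_ge0 // mulVf.
rewrite -scalemxAr vnorm2Z ger0_norm ?invr_ge0 ?vnorm2_ge0 //.
by rewrite ler_pdivrMl // mulrC.
Qed.

End SpectralNorm.

Section Relu.
Variables (R : realType) (p q : nat).
Implicit Types (M : 'M[R]_(p, q)).

Lemma relu_ge0 M i j : 0 <= relu M i j.
Proof. by rewrite mxE le_max lexx. Qed.

Lemma relu_id M : (forall i j, 0 <= M i j) -> relu M = M.
Proof. by move=> M_ge0; apply/matrixP => i j; rewrite mxE max_r. Qed.

Lemma relu_dist_le M1 M2 i j :
  `|(relu M1 - relu M2) i j| <= `|(M1 - M2) i j|.
Proof.
rewrite !mxE; set a := M1 i j; set b := M2 i j.
have := ler_norm (a - b); have := ler_norm (b - a); rewrite distrC => h1 h2.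
by rewrite ler_norml !maxEle; case: (lerP 0 a); case: (lerP 0 b) => *;
  apply/andP; split; lra.
Qed.

End Relu.

Section NonnegativeContraction.
Variables (R : realType) (m : nat) (B : 'M[R]_m) (c : R).
Hypotheses (c_ge0 : 0 <= c) (c_lt1 : c < 1).
Hypothesis B_contraction : forall v, vnorm2 (B *m v) <= c * vnorm2 v.

Lemma contraction_fixpoint_eq0 (v : 'cV[R]_m) : B *m v = v -> v = 0.
Proof.
move=> Bv; apply: vnorm2_eq0; have := B_contraction v; rewrite Bv => v_le.
by move: c_ge0 c_lt1 (vnorm2_ge0 v) v_le; nra.
Qed.

Lemma contraction_unitmx : (1%:M - B) \in unitmx.
Proof.
rewrite -unitmx_tr -row_free_unit; apply: inj_row_free => u uB.
have : (1%:M - B) *m u^T = 0 by rewrite -[LHS]trmxK trmx_mul trmxK uB trmx0.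
rewrite mulmxBl mul1mx => /eqP; rewrite subr_eq0 eq_sym => /eqP.
by move=> /contraction_fixpoint_eq0 /(congr1 trmx); rewrite trmxK trmx0.
Qed.

Hypothesis B_ge0 : forall i j, 0 <= B i j.

Lemma subinvariant_eq0 N (E : 'M[R]_(N, m)) :
  (forall i j, 0 <= E i j) -> (forall i j, E i j <= (E *m B) i j) -> E = 0.
Proof.
move=> E_ge0 E_le; apply/matrixP => i j; rewrite mxE.
pose e : 'cV[R]_m := (row i E)^T.
have eE k : e k 0 = E i k by rewrite !mxE.
have e_le : vnorm2 e ^+ 2 <= \sum_k e k 0 * (B *m e) k 0.
  have -> : \sum_k e k 0 * (B *m e) k 0 = \sum_k e k 0 * (E *m B) i k.
    under eq_bigr do rewrite [(B *m e) _ _]mxE mulr_sumr.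
    under [RHS]eq_bigr do rewrite [(E *m B) _ _]mxE mulr_sumr.
    rewrite exchange_big; apply: eq_bigr => k _; apply: eq_bigr => l _.
    by rewrite !eE [RHS]mulrC mulrA.
  rewrite vnorm2_sqr; apply: ler_sum => k _; rewrite expr2 eE.
  by apply: ler_wpM2l; [apply: E_ge0 | apply: E_le].
have Be_le : vnorm2 (B *m e) ^+ 2 <= c ^+ 2 * vnorm2 e ^+ 2.
  by rewrite -exprMn lerXn2r ?nnegrE ?mulr_ge0 ?vnorm2_ge0.
have e0 : vnorm2 e ^+ 2 = 0.
  have c2_lt1 : c ^+ 2 < 1 by move: c_ge0 c_lt1; nra.
  by move: c2_lt1 (sqr_ge0 (vnorm2 e)) (dot_le_vnorm2 e (B *m e)) e_le Be_le; nra.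
by move/eqP: e0; rewrite sqrf_eq0 => /eqP/vnorm2_eq0 e0; rewrite -eE e0 mxE.
Qed.

Lemma fixpoint_ge0 {N} {P Z : 'M[R]_(N, m)} :
  (forall i j, 0 <= P i j) -> Z = Z *m B + P -> forall i j, 0 <= Z i j.
Proof.
move=> P_ge0 Z_fix.
pose E := map_mx (fun x => Num.max 0 (- x)) Z.
have E_ge0 i j : 0 <= E i j by rewrite mxE le_max lexx.
have E_le i j : E i j <= (E *m B) i j.
  rewrite [E i j]mxE ge_max; apply/andP; split.
    by rewrite mxE sumr_ge0 // => k _; apply: mulr_ge0.
  rewrite {1}Z_fix mxE opprD.
  apply: (@le_trans _ _ (- (Z *m B) i j)); first by have := P_ge0 i j; lra.
  rewrite !mxE -sumrN; apply: ler_sum => k _; rewrite -mulNr.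
  by rewrite ler_wpM2r // mxE le_max lexx orbT.
move=> i j; move/matrixP: (subinvariant_eq0 E_ge0 E_le) => /(_ i j).
by rewrite !mxE => /eqP; rewrite eq_le ge_max oppr_le0 => /andP[/andP[_ ->]].
Qed.

Lemma relu_fixpoint_unique {N} {P Z1 Z2 : 'M[R]_(N, m)} :
  Z1 = relu (Z1 *m B + P) -> Z2 = relu (Z2 *m B + P) -> Z1 = Z2.
Proof.
move=> Z1_fix Z2_fix.
pose E := map_mx (fun x => `|x|) (Z1 - Z2).
have E_le i j : E i j <= (E *m B) i j.
  rewrite mxE {1}Z1_fix {1}Z2_fix; apply: le_trans (relu_dist_le _ _ _ _) _.
  rewrite opprD addrACA subrr addr0 -mulmxBl mxE.
  apply: le_trans (ler_norm_sum _ _ _) _; rewrite mxE; apply: ler_sum => k _.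
  by rewrite normrM (ger0_norm (B_ge0 k j)) [E i k]mxE.
have E0 : E = 0 by apply: subinvariant_eq0 => // i j; rewrite mxE.
apply/eqP; rewrite -subr_eq0; apply/eqP/matrixP => i j.
by move/matrixP: E0 => /(_ i j); rewrite !mxE => /normr0_eq0 ->.
Qed.

End NonnegativeContraction.

Theorem lemma5 (R : realType) (N d m : nat)
  (X : 'M[R]_(N, d)) (W : 'M[R]_(d, m)) (A : 'M[R]_m) (gamma : R) :
  (forall i j, 0 <= A i j) ->
  0 < gamma ->
  spec_norm A < gamma^-1 ->
  let Phi := relu (X *m W) in
  (1%:M - gamma *: A) \in unitmx /\
  (forall Z : 'M[R]_(N, m),
     Z = relu (gamma *: (Z *m A) + Phi) <-> Z = Phi *m invmx (1%:M - gamma *: A)).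
Proof.
move=> A_ge0 gamma_gt0 A_lt Phi; set B := gamma *: A.
have c_ge0 : 0 <= gamma * spec_norm A.
  exact: mulr_ge0 (ltW gamma_gt0) (spec_norm_ge0 A).
have c_lt1 : gamma * spec_norm A < 1.
  by rewrite -(ltr_pM2l gamma_gt0) mulfV ?gt_eqF in A_lt.
have B_ge0 i j : 0 <= B i j.
  by rewrite /B mxE; apply: mulr_ge0 (ltW gamma_gt0) (A_ge0 i j).
have B_contraction v : vnorm2 (B *m v) <= gamma * spec_norm A * vnorm2 v.
  by rewrite -scalemxAl vnorm2Z gtr0_norm // -mulrA ler_pM2l // vnorm2_mulmx_le.
have B_unit := contraction_unitmx c_ge0 c_lt1 B_contraction.
have scaleB Z : gamma *: (Z *m A) = Z *m B by rewrite scalemxAr.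
set Z0 := Phi *m invmx _.
have Z0_fix : Z0 = Z0 *m B + Phi.
  by rewrite -[in RHS](mulmxKV B_unit Phi) -mulmxDr addrC subrK mulmx1.
have Z0_sol : Z0 = relu (Z0 *m B + Phi).
  have Phi_ge0 i j : 0 <= Phi i j by apply: relu_ge0.
  rewrite -Z0_fix relu_id //.
  exact: (fixpoint_ge0 c_ge0 c_lt1 B_contraction B_ge0 Phi_ge0 Z0_fix).
split=> // Z; rewrite scaleB; split=> [Z_sol|->//].
exact: (relu_fixpoint_unique c_ge0 c_lt1 B_contraction B_ge0 Z_sol Z0_sol).
Qed.
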